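(* Consider an $N$-player finite-horizon LQ game, viewed as the quadratic game in the stacked inputs $U_1,\ldots,U_N$ described in the context, under its gradient-based learning dynamics with an arbitrary disturbance in player $i$'s gradient. If player $j\neq i$ is disturbance decoupled from player $i$, then $$\begin{bmatrix}B_j^\top\\ B_j^\top A^\top\\ \vdots\\ B_j^\top (A^\top)^{T-1}\end{bmatrix}Q_j\begin{bmatrix}B_i & AB_i & \cdots & A^{T-1}B_i\end{bmatrix}=0.$$ Moreover, if in addition $Q_j$ is positive definite and $T\ge m$, then the controllable subspace of the pair $(\tilde A,\tilde B_i)$ is contained in the unobservable subspace of the pair $(\tilde B_j^\top,\tilde A^\top)$ (output matrix $\tilde B_j^\top$, state matrix $\tilde A^\top$), where $\tilde A=Q_j^{1/2}AQ_j^{-1/2}$, $\tilde B_i=Q_j^{1/2}B_i$, $\tilde B_j=Q_j^{1/2}B_j$.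
   Context: Finite-horizon LQ game: state $z^t\in\mathbb{R}^m$, initial state $z^0$, horizon $T$, dynamics $z^{t+1}=Az^t+\sum_{\ell=1}^N B_\ell u_\ell^t$ ($t=0,\ldots,T-1$), with $A\in\mathbb{R}^{m\times m}$, $B_\ell\in\mathbb{R}^{m\times m_\ell}$. Player $\ell$ chooses $U_\ell=(u_\ell^0,\ldots,u_\ell^{T-1})\in\mathbb{R}^{n_\ell}$, $n_\ell=Tm_\ell$, to minimize $\tfrac12\big(\sum_{t=0}^T (z^t)^\top Q_\ell z^t+\sum_{t=0}^{T-1}(u_\ell^t)^\top R_\ell u_\ell^t\big)$, with $Q_\ell\in\mathbb{R}^{m\times m}$, $R_\ell\in\mathbb{R}^{m_\ell\times m_\ell}$ symmetric. Let $n=\sum_\ell n_\ell$. Writing $Z=(z^0,\ldots,z^T)=\sum_\ell G_\ell U_\ell+Hz^0$, where $H=[I;A;\ldots;A^T]$ and $G_\ell\in\mathbb{R}^{(T+1)m\times Tm_\ell}$ has block $(t,s)$ ($t=0,\ldots,T$, $s=0,\ldots,T-1$) equal to $A^{t-1-s}B_\ell$ if $s\le t-1$ and $0$ otherwise, the cost of player $\ell$ is $f_\ell(U)=\tfrac12(\sum_q G_qU_q+Hz^0)^\top\bar Q_\ell(\sum_q G_qU_q+Hz^0)+\tfrac12U_\ell^\top\bar R_\ell U_\ell$ with $\bar Q_\ell=\mathrm{blkdiag}(Q_\ell,\ldots,Q_\ell)$ ($T+1$ blocks), $\bar R_\ell=\mathrm{blkdiag}(R_\ell,\ldots,R_\ell)$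 ($T$ blocks). With step sizes $\gamma_\ell>0$ and $\Gamma=\mathrm{blkdiag}(\gamma_1I_{n_1},\ldots,\gamma_NI_{n_N})$, the undisturbed learning dynamics are $U^{k+1}=WU^k-\Gamma c$ where $c=(G_1^\top\bar Q_1Hz^0,\ldots,G_N^\top\bar Q_NHz^0)$, $W=I_n-M$, and $M$ is the block matrix with $M_{\ell q}=\gamma_\ell G_\ell^\top\bar Q_\ell G_q$ for $\ell\neq q$ and $M_{\ell\ell}=\gamma_\ell(G_\ell^\top\bar Q_\ell G_\ell+\bar R_\ell)$. Disturbed dynamics: $Y^{k+1}=WY^k-\Gamma c-\Gamma d^k$ with $d^k\in\mathcal{D}_i=\{d\in\mathbb{R}^n: d_q=0\ \forall q\neq i\}$ arbitrary. Player $j\neq i$ is disturbance decoupled from player $i$ if for every initial $U^0$, with $Y^0=U^0$, one has $Y^k_j=U^k_j$ for all $k\ge0$ and every such disturbance sequence. The controllable subspace of $(\tilde A,\tilde B_i)$ is $\mathrm{im}[\tilde B_i,\tilde A\tilde B_i,\ldots,\tilde A^{m-1}\tilde B_i]$; the unobservable subspace of $(C,F)$ is $\{x: CF^px=0\ \forall p\ge0\}$. *)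

From mathcomp Require Import all_boot all_order all_algebra.
Set Implicit Arguments. Unset Strict Implicit. Unset Printing Implicit Defensive.
Import Order.TTheory GRing.Theory Num.Theory.
Local Open Scope ring_scope.

Section LQGame.
Variable R : realFieldType.

Variables (m N T : nat) (mu : 'I_N -> nat).
Variables (A : 'M[R]_m) (B : forall l : 'I_N, 'M[R]_(m, mu l)).
Variables (Q : 'I_N -> 'M[R]_m) (Rc : forall l : 'I_N, 'M[R]_(mu l)).
Variables (z0 : 'cV[R]_m) (gam : 'I_N -> R).

(* n_l = T * m_l, represented as \sum_(t < T) m_l (T blocks of size m_l) *)
Definition nl (l : 'I_N) : nat := (\sum_(t < T) mu l)%N.
Definition ntot : nat := (\sum_(l < N) nl l)%N.

Definition Hmat : 'M[R]_(\sum_(t < T.+1) m, m) := \mxcol_(t < T.+1) (A ^+ t).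

Definition Gmat (l : 'I_N) : 'M[R]_(\sum_(t < T.+1) m, nl l) :=
  \mxblock_(t < T.+1, s < T)
     (if (s < t)%N then A ^+ (t.-1 - s) *m B l else 0).

Definition Qbar (l : 'I_N) : 'M[R]_(\sum_(t < T.+1) m) := \mxdiag_(t < T.+1) Q l.
Definition Rbar (l : 'I_N) : 'M[R]_(nl l) := \mxdiag_(t < T) Rc l.

Definition Mmat : 'M[R]_ntot :=
  \mxblock_(l < N, q < N) (gam l *: ((Gmat l)^T *m Qbar l *m Gmat q))
  + \mxdiag_(l < N) (gam l *: Rbar l).

Definition Wmat : 'M[R]_ntot := 1%:M - Mmat.

Definition Gam : 'M[R]_ntot := \mxdiag_(l < N) (gam l)%:M.

Definition cvec : 'cV[R]_ntot :=
  \mxcol_(l < N) ((Gmat l)^T *m Qbar l *m Hmat *m z0).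

Fixpoint Utraj (U0 : 'cV[R]_ntot) (k : nat) : 'cV[R]_ntot :=
  match k with
  | 0 => U0
  | k'.+1 => Wmat *m Utraj U0 k' - Gam *m cvec
  end.

Fixpoint Ytraj (Y0 : 'cV[R]_ntot) (d : nat -> 'cV[R]_ntot) (k : nat) : 'cV[R]_ntot :=
  match k with
  | 0 => Y0
  | k'.+1 => Wmat *m Ytraj Y0 d k' - Gam *m cvec - Gam *m d k'
  end.

Definition blk (Y : 'cV[R]_ntot) (l : 'I_N) : 'cV[R]_(nl l) :=
  @submxcol R N nl 1 Y l.

Definition in_Di (i : 'I_N) (d : 'cV[R]_ntot) : Prop :=
  forall q : 'I_N, q != i -> blk d q = 0.

Definition disturbance_decoupled (j i : 'I_N) : Prop :=
  forall (U0 : 'cV[R]_ntot) (d : nat -> 'cV[R]_ntot),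
    (forall k, in_Di i (d k)) ->
    forall k, blk (Ytraj U0 d k) j = blk (Utraj U0 k) j.

End LQGame.

Definition ctrb_mx (R : realFieldType) (k p : nat) (F : 'M[R]_k) (G : 'M[R]_(k, p))
  : 'M[R]_(k, \sum_(t < k) p) := \mxrow_(t < k) (F ^+ t *m G).

Definition in_controllable_subspace (R : realFieldType) (k p : nat)
  (F : 'M[R]_k) (G : 'M[R]_(k, p)) (x : 'cV[R]_k) : Prop :=
  exists v : 'cV[R]_(\sum_(t < k) p), x = ctrb_mx F G *m v.

Definition in_unobservable_subspace (R : realFieldType) (k r : nat)
  (C : 'M[R]_(r, k)) (F : 'M[R]_k) (x : 'cV[R]_k) : Prop :=
  forall t : nat, C *m F ^+ t *m x = 0.

Definition symmetric_mx (R : realFieldType) (k : nat) (S : 'M[R]_k) : Prop := S^T = S.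

Definition pos_def (R : realFieldType) (k : nat) (S : 'M[R]_k) : Prop :=
  S^T = S /\ forall x : 'cV[R]_k, x != 0 -> 0 < (x^T *m S *m x) 0 0.

From mathcomp Require Import all_boot all_order all_algebra.
Set Implicit Arguments. Unset Strict Implicit. Unset Printing Implicit Defensive.
Import Order.TTheory GRing.Theory Num.Theory.
Local Open Scope ring_scope.

(* A pulse disturbance v in player i's gradient at step 0 reaches player j's
   block two steps later as -gam_j gam_i G_j^T Qbar_j G_i v, so decoupling
   forces G_j^T Qbar_j G_i = 0.  The (s, s') block of that matrix sums the
   terms B_j^T (A^T)^a Q_j A^b B_i along the diagonal b - a = s - s', and
   consecutive diagonal sums differ by a single term, so every term with
   a, b < T vanishes.  For T >= m, Cayley-Hamilton extends this to all powers
   of A^T, and conjugating by S = Q_j^(1/2) turns it into the inclusion of the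
   controllable subspace of (At, Bti) in the unobservable one of (Btj^T, At^T). *)

Lemma trmxX (R : comPzRingType) n (A : 'M[R]_n) k : (A ^+ k)^T = A^T ^+ k.
Proof.
elim: k => [|k IH]; first by rewrite !expr0 trmx1.
by rewrite exprS -mulmxE trmx_mul IH exprSr mulmxE.
Qed.

Lemma horner_mx_Xn_modp_char_poly (F : fieldType) n (A : 'M[F]_n.+1) t :
  A ^+ t = horner_mx A ('X^t %% char_poly A).
Proof.
rewrite -[A in LHS]horner_mx_X -rmorphXn /=.
rewrite {1}(divp_eq 'X^t (char_poly A)) rmorphD rmorphM /=.
by rewrite Cayley_Hamilton mulr0 add0r.
Qed.

Lemma mulmx_powers_eq0 (F : fieldType) n p q (C : 'M[F]_(p, n)) (A : 'M_n)
    (D : 'M_(n, q)) :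
  (forall k, (k < n)%N -> C *m A ^+ k *m D = 0) ->
  forall t, C *m A ^+ t *m D = 0.
Proof.
case: n A C D => [|n] A C D CAD0 t; first by rewrite thinmx0 !mul0mx.
set r := 'X^t %% char_poly A.
have r_small : (size r <= n.+1)%N.
  by rewrite -ltnS -(size_char_poly A) ltn_modp monic_neq0 ?char_poly_monic.
rewrite horner_mx_Xn_modp_char_poly -/r -[r]coefK poly_def rmorph_sum /=.
rewrite mulmx_sumr mulmx_suml big1 // => k _.
rewrite horner_mxZ rmorphXn /= horner_mx_X -scalemxAr -scalemxAl CAD0 ?scaler0 //.
exact: leq_trans (ltn_ord k) r_small.
Qed.

Lemma conjmxX_mul (F : fieldType) n p (S A : 'M[F]_n) (Y : 'M_(n, p)) k :
  S \in unitmx -> (S *m A *m invmx S) ^+ k *m (S *m Y) = S *m (A ^+ k *m Y).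
Proof.
move=> S_unit; elim: k => [|k IH]; first by rewrite !expr0 !mul1mx.
by rewrite exprS -mulmxE -mulmxA IH -!mulmxA mulKmx // exprS -mulmxE -mulmxA.
Qed.

Lemma pos_def_unitmx (R : realFieldType) n (S : 'M[R]_n) : pos_def S -> S \in unitmx.
Proof.
case=> _ S_pos; rewrite unitmxE unitfE; apply/negP => /det0P [v v_neq0 vS0].
have vT_neq0 : v^T != 0 by rewrite -trmx0 (inj_eq trmx_inj).
by have := S_pos _ vT_neq0; rewrite trmxK vS0 mul0mx mxE ltxx.
Qed.

Section DiagonalSums.
Variables (V : zmodType) (T : nat) (F : nat -> nat -> V).

Definition diag_sum (s s' : nat) : V :=
  \sum_(t < T.+1 | (s < t)%N && (s' < t)%N) F (t.-1 - s)%N (t.-1 - s')%N.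

Lemma diag_sumS s s' : (s < T)%N -> (s' < T)%N ->
  diag_sum s s' = F (T.-1 - s)%N (T.-1 - s')%N + diag_sum s.+1 s'.+1.
Proof.
move=> sT s'T; rewrite /diag_sum big_mkcond [X in _ + X]big_mkcond.
rewrite big_ord_recr big_ord_recl /= sT s'T addrC add0r.
congr (_ + _); apply: eq_bigr => t _.
by rewrite /bump /= !add1n !ltnS !subnS !predn_sub.
Qed.

Lemma diag_sum_eq0 :
    (forall s s', (s < T)%N -> (s' < T)%N -> diag_sum s s' = 0) ->
  forall a b, (a < T)%N -> (b < T)%N -> F a b = 0.
Proof.
move=> diag0 a b aT bT.
have {}diag0 s s' : diag_sum s s' = 0.
  have [/andP[sT s'T] | out] := boolP ((s < T)%N && (s' < T)%N); first exact: diag0.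
  apply: big1 => t /andP[st s't]; case/negP: out.
  by rewrite (leq_trans st) ?(leq_trans s't) // -ltnS.
have T_gt0 : (0 < T)%N by apply: leq_ltn_trans aT.
have la : (T.-1 - a < T)%N by rewrite (leq_ltn_trans (leq_subr _ _)) ?prednK.
have lb : (T.-1 - b < T)%N by rewrite (leq_ltn_trans (leq_subr _ _)) ?prednK.
have := diag_sumS la lb.
by rewrite !diag0 addr0 !subKn // -ltnS prednK.
Qed.

End DiagonalSums.

Section LQGameDecoupling.
Variables (R : realFieldType) (m N T : nat) (mu : 'I_N -> nat).
Variables (A : 'M[R]_m) (B : forall l : 'I_N, 'M[R]_(m, mu l)).
Variables (Q : 'I_N -> 'M[R]_m) (Rc : forall l : 'I_N, 'M[R]_(mu l)).
Variables (z0 : 'cV[R]_m) (gam : 'I_N -> R).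

Local Notation G := (Gmat T A B).
Local Notation Qb := (Qbar T Q).
Local Notation W := (Wmat T A B Q Rc gam).
Local Notation Gm := (Gam T mu gam).
Local Notation Ytraj := (Ytraj A B Q Rc z0 gam).
Local Notation Utraj := (Utraj A B Q Rc z0 gam).

Lemma Gram_block (j i : 'I_N) (s s' : 'I_T) :
  submxblock ((G j)^T *m Qb j *m G i) s s' =
  diag_sum T (fun a b => (A ^+ a *m B j)^T *m Q j *m (A ^+ b *m B i)) s s'.
Proof.
rewrite /Gmat tr_mxblock /Qbar mul_mxblock_mxdiag mul_mxblock mxblockK.
rewrite /diag_sum [RHS]big_mkcond; apply: eq_bigr => t _ /=.
by case: ifP => _; case: ifP => _; rewrite ?trmx0 ?mul0mx ?mulmx0.
Qed.

(* [pid_mx] is the identity exactly on block q = i, which avoids a cast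
   between the equal block sizes [nl q] and [nl i]. *)
Definition blk_embed (i : 'I_N) : 'M[R]_(ntot T mu, nl T mu i) :=
  \mxcol_(q < N) (if q == i then pid_mx (nl T mu i) else 0).

Lemma in_Di_blk_embed (i : 'I_N) (u : 'cV_(nl T mu i)) : in_Di i (blk_embed i *m u).
Proof. by move=> q /negbTE qi; rewrite /blk -submxcol_mul mxcolK qi mul0mx. Qed.

Lemma submxcol_W_Gam_blk_embed (j i : 'I_N) : j != i ->
  submxcol (W *m (Gm *m blk_embed i)) j =
  - (gam j * gam i) *: ((G j)^T *m Qb j *m G i).
Proof.
move=> /negbTE ji.
rewrite /Gam mul_mxdiag_mxcol /Wmat mulmxBl mul1mx submxcolB mxcolK ji mulmx0 sub0r.
rewrite /Mmat mulmxDl mul_mxblock_mxrow mul_mxdiag_mxcol submxcolD !mxcolK ji.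
rewrite !mulmx0 addr0.
rewrite (bigD1 i) //= [X in _ + X]big1 => [|q /negbTE ->]; last by rewrite !mulmx0.
by rewrite [_ + 0]addr0 eqxx pid_mx_1 mulmx1 mul_mx_scalar scalerA mulrC scaleNr.
Qed.

Lemma Ytraj_sub_Utraj U0 d k :
  Ytraj U0 d k.+1 - Utraj U0 k.+1 = W *m (Ytraj U0 d k - Utraj U0 k) - Gm *m d k.
Proof. by rewrite /= mulmxBr addrAC opprB subrKA. Qed.

Section Decoupled.
Variables j i : 'I_N.
Hypothesis gam_gt0 : forall l, 0 < gam l.
Hypothesis ji : j != i.
Hypothesis decoupled : disturbance_decoupled T A B Q Rc z0 gam j i.

Lemma decoupled_Gram_eq0 : (G j)^T *m Qb j *m G i = 0.
Proof.
set X := _ *m G i.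
suff Xv0 (v : 'cV_(nl T mu i)) : X *m v = 0.
  by apply/trmx_inj/eqP/mulmxP => u; rewrite trmx0 mulmx0 -[u]trmxK -trmx_mul Xv0 trmx0.
pose d k : 'cV_(ntot T mu) := if k is 0 then blk_embed i *m v else 0.
have d_in_Di k : in_Di i (d k).
  by case: k => [|k] /=; [exact: in_Di_blk_embed | move=> q _; rewrite /blk submxcol0].
move/eqP: (@decoupled 0 d d_in_Di 2); rewrite -subr_eq0 /blk -submxcolB.
rewrite !Ytraj_sub_Utraj /= subrr !mulmx0 subr0 sub0r mulmxN submxcolN oppr_eq0.
rewrite !mulmxA -submxcol_mul -mulmxA submxcol_W_Gam_blk_embed // -scalemxAl.
by rewrite scaler_eq0 oppr_eq0 mulf_eq0 !gt_eqF ?gam_gt0 // => /eqP.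
Qed.

Lemma decoupled_markov_eq0 a b : (a < T)%N -> (b < T)%N ->
  (B j)^T *m A^T ^+ a *m Q j *m (A ^+ b *m B i) = 0.
Proof.
move=> aT bT; rewrite -trmxX -trmx_mul.
pose F x y := (A ^+ x *m B j)^T *m Q j *m (A ^+ y *m B i).
apply: (@diag_sum_eq0 _ T F _ a b aT bT) => s s' sT s'T.
by rewrite -(Gram_block j i (Ordinal sT) (Ordinal s'T)) decoupled_Gram_eq0 submxblock0.
Qed.

Lemma decoupled_markov_eq0_all a b : (m <= T)%N -> (b < T)%N ->
  (B j)^T *m A^T ^+ a *m Q j *m (A ^+ b *m B i) = 0.
Proof.
move=> mT bT; rewrite -mulmxA.
apply: mulmx_powers_eq0 => k km; rewrite [_ *m (Q j *m _)]mulmxA.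
exact (decoupled_markov_eq0 (leq_trans km mT) bT).
Qed.

End Decoupled.

End LQGameDecoupling.

Unset Implicit Arguments.
Set Strict Implicit.

Theorem corollary2 (R : realFieldType) (m N T : nat) (mu : 'I_N -> nat)
  (A : 'M[R]_m) (B : forall l : 'I_N, 'M[R]_(m, mu l))
  (Q : 'I_N -> 'M[R]_m) (Rc : forall l : 'I_N, 'M[R]_(mu l))
  (z0 : 'cV[R]_m) (gam : 'I_N -> R)
  (HQsym : forall l, symmetric_mx (Q l))
  (HRsym : forall l, symmetric_mx (Rc l))
  (Hgam : forall l, 0 < gam l)
  (i j : 'I_N) (Hji : j != i) :
  disturbance_decoupled T A B Q Rc z0 gam j i ->
  (\mxcol_(t < T) ((B j)^T *m (A^T) ^+ t)) *m Q j
     *m (\mxrow_(s < T) (A ^+ s *m B i)) = 0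
  /\
  (pos_def (Q j) -> (m <= T)%N ->
   forall S : 'M[R]_m, pos_def S -> S *m S = Q j ->
   let At := S *m A *m invmx S in
   let Bti := S *m B i in
   let Btj := S *m B j in
   forall x : 'cV[R]_m,
     in_controllable_subspace At Bti x ->
     in_unobservable_subspace Btj^T At^T x).
Proof.
move=> decoupled; split.
  rewrite mxcol_mul mul_mxcol_mxrow; apply/mxblockP => a b.
  by rewrite mxblockK submxblock0 (decoupled_markov_eq0 Hgam Hji decoupled).
move=> _ mT S S_pd SS At Bti Btj x [v ->] t.
have S_unit := pos_def_unitmx S_pd.
rewrite -trmxX -trmx_mul conjmxX_mul // /ctrb_mx.
under eq_mxrow => s do rewrite conjmxX_mul //.
rewrite mulmxA mul_mxrow; set blocks := \mxrow_(s < m) _.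
suff -> : blocks = 0 by rewrite mul0mx.
apply/mxrowP => s; rewrite mxrowK submxrow0 trmx_mul S_pd.1 -mulmxA (mulmxA S) SS.
rewrite trmx_mul trmxX mulmxA.
exact: (decoupled_markov_eq0_all Hgam Hji decoupled t mT (leq_trans (ltn_ord s) mT)).
Qed.
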